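(* Let $\zeta_2=\int_0^\infty \frac{\mathrm{d}t}{\sqrt{1+t^4}}$ and let $\mathrm{sleafh}_2:(-\zeta_2,\zeta_2)\to\mathbb{R}$ be the hyperbolic leaf function of basis $2$. For every real $l$ with $2l\in(-\zeta_2,\zeta_2)$, $$\mathrm{sleafh}_2(2l)=\frac{2\,\mathrm{sleafh}_2(l)\sqrt{1+(\mathrm{sleafh}_2(l))^4}}{1-(\mathrm{sleafh}_2(l))^4}.$$
   Context: For a natural number $n$, let $\zeta_n=\int_0^\infty \frac{\mathrm{d}t}{\sqrt{1+t^{2n}}}$. The hyperbolic leaf function $\mathrm{sleafh}_n$ is the solution $r(l)$ on $(-\zeta_n,\zeta_n)$ of $\frac{\mathrm{d}^2r}{\mathrm{d}l^2}=n\,r^{2n-1}$ with $r(0)=0$, $r'(0)=1$; equivalently it is the inverse function of $r\mapsto \int_0^r \frac{\mathrm{d}t}{\sqrt{1+t^{2n}}}$, $r\in\mathbb{R}$. *)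

From Stdlib Require Import Reals ClassicalEpsilon.
From Coquelicot Require Import Coquelicot.
Open Scope R_scope.

Definition leaf_integrand (n : nat) (t : R) : R := / sqrt (1 + t ^ (2 * n)).

Definition leaf_arc (n : nat) (r : R) : R := RInt (leaf_integrand n) 0 r.

Definition zeta (n : nat) : R :=
  real (Lim (fun x => leaf_arc n x) p_infty).

(* sleafh_n : inverse function of leaf_arc n (meaningful on (-zeta_n, zeta_n)) *)
Definition sleafh (n : nat) (l : R) : R :=
  epsilon (inhabits 0) (fun r => leaf_arc n r = l).

From Stdlib Require Import Reals Lra Psatz Lia ClassicalEpsilon.
From Coquelicot Require Import Coquelicot.
Open Scope R_scope.

(* The map [leaf_double] is a duplication formula: the derivative of
   [leaf_arc 2 (leaf_double s) - 2 * leaf_arc 2 s] vanishes on (-1, 1), so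
   [leaf_arc 2 (leaf_double s) = 2 * leaf_arc 2 s] there.  Since [leaf_double]
   blows up at 1, the same identity gives zeta_2 = 2 * leaf_arc 2 1; hence
   every l with |2 l| < zeta_2 is [leaf_arc 2 r] with |r| < 1, and inverting
   the duplication identity yields the formula for sleafh_2 (2 l). *)

Lemma continuity_pt_of_is_derive (h : R -> R) x l :
  is_derive h x l -> continuity_pt h x.
Proof.
  intros Hd; apply continuity_pt_filterlim.
  apply (ex_derive_continuous (K := R_AbsRing) (V := R_NormedModule)).
  now exists l.
Qed.

Lemma eq_of_is_derive_0 (h : R -> R) a b :
  (forall x, Rmin a b <= x <= Rmax a b -> is_derive h x 0) -> h b = h a.
Proof.
  intros Hd.
  destruct (MVT_gen h a b (fun _ => 0)) as [c [_ Hc]].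
  - intros x Hx; apply Hd; lra.
  - intros x Hx; now apply continuity_pt_of_is_derive with 0, Hd.
  - lra.
Qed.

Section LeafArc.

Variable n : nat.

Lemma pow_even_ge0 t : 0 <= t ^ (2 * n).
Proof. rewrite Nat.mul_comm, pow_mult; apply pow2_ge_0. Qed.

Lemma one_le_sqrt_one_add_pow_even t : 1 <= sqrt (1 + t ^ (2 * n)).
Proof.
  rewrite <- sqrt_1 at 1; apply sqrt_le_1_alt.
  pose proof (pow_even_ge0 t); lra.
Qed.

Lemma leaf_integrand_pos t : 0 < leaf_integrand n t.
Proof.
  apply Rinv_0_lt_compat; pose proof (one_le_sqrt_one_add_pow_even t); lra.
Qed.

Lemma leaf_integrand_le1 t : leaf_integrand n t <= 1.
Proof.
  rewrite <- Rinv_1; apply Rinv_le_contravar; [lra|].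
  apply one_le_sqrt_one_add_pow_even.
Qed.

Lemma leaf_integrand_opp t : leaf_integrand n (- t) = leaf_integrand n t.
Proof.
  unfold leaf_integrand; rewrite !pow_mult.
  replace ((- t) ^ 2) with (t ^ 2) by ring; reflexivity.
Qed.

Lemma continuous_leaf_integrand t : continuous (leaf_integrand n) t.
Proof.
  apply (ex_derive_continuous (K := R_AbsRing) (V := R_NormedModule)).
  pose proof (one_le_sqrt_one_add_pow_even t); pose proof (pow_even_ge0 t).
  unfold leaf_integrand; set (m := (2 * n)%nat) in *; auto_derive.
  repeat split; lra.
Qed.

Lemma is_derive_leaf_arc r : is_derive (leaf_arc n) r (leaf_integrand n r).
Proof.
  apply (is_derive_RInt (V := R_CompleteNormedModule)) with 0.
  - apply filter_forall; intros b.
    apply (RInt_correct (V := R_CompleteNormedModule)), ex_RInt_continuous.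
    intros; apply continuous_leaf_integrand.
  - apply continuous_leaf_integrand.
Qed.

Lemma ex_derive_leaf_arc r : ex_derive (leaf_arc n) r.
Proof. eexists; apply is_derive_leaf_arc. Qed.

Lemma Derive_leaf_arc r : Derive (leaf_arc n) r = leaf_integrand n r.
Proof. apply is_derive_unique, is_derive_leaf_arc. Qed.

Lemma continuity_leaf_arc : continuity (leaf_arc n).
Proof. intros r; exact (continuity_pt_of_is_derive _ _ _ (is_derive_leaf_arc r)). Qed.

Lemma leaf_arc0 : leaf_arc n 0 = 0.
Proof. apply (RInt_point (V := R_CompleteNormedModule)). Qed.

Lemma leaf_arc_opp r : leaf_arc n (- r) = - leaf_arc n r.
Proof.
  enough (H : leaf_arc n (- r) + leaf_arc n r = leaf_arc n (- 0) + leaf_arc n 0)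
    by (rewrite Ropp_0, leaf_arc0 in H; lra).
  apply (eq_of_is_derive_0 (fun x => leaf_arc n (- x) + leaf_arc n x)); intros x _.
  auto_derive.
  - repeat split; apply ex_derive_leaf_arc.
  - rewrite !Derive_leaf_arc, leaf_integrand_opp; ring.
Qed.

Lemma leaf_arc_increment a b :
  a < b -> 0 < leaf_arc n b - leaf_arc n a <= b - a.
Proof.
  intros Hab.
  destruct (MVT_gen (leaf_arc n) a b (leaf_integrand n)) as [c [_ ->]].
  - intros x _; apply is_derive_leaf_arc.
  - intros x _; apply continuity_leaf_arc.
  - pose proof (leaf_integrand_pos c); pose proof (leaf_integrand_le1 c); nra.
Qed.

Lemma leaf_arc_inj a b : leaf_arc n a = leaf_arc n b -> a = b.
Proof.
  intros E; destruct (Rtotal_order a b) as [H | [H | H]]; trivial;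
    pose proof (leaf_arc_increment _ _ H); lra.
Qed.

Lemma sleafh_leaf_arc r : sleafh n (leaf_arc n r) = r.
Proof.
  apply leaf_arc_inj, (epsilon_spec (inhabits 0) (fun x => leaf_arc n x = leaf_arc n r)).
  now exists r.
Qed.

Lemma leaf_arc_onto a l :
  - leaf_arc n a < l < leaf_arc n a -> exists r, - a < r < a /\ leaf_arc n r = l.
Proof.
  intros Hl.
  assert (Ha : 0 < a).
  { destruct (Rlt_le_dec 0 a) as [Ha | Ha]; trivial.
    destruct (Rle_lt_or_eq_dec _ _ Ha) as [Ha' | ->].
    - pose proof (leaf_arc_increment _ _ Ha'); rewrite leaf_arc0 in *; lra.
    - rewrite leaf_arc0 in Hl; lra. }
  destruct (IVT_gen (leaf_arc n) (- a) a l continuity_leaf_arc) as [r [Hr Er]].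
  { rewrite leaf_arc_opp, Rmin_left, Rmax_right; lra. }
  rewrite Rmin_left, Rmax_right in Hr by lra.
  exists r; split; [|exact Er].
  split; apply Rnot_le_lt; intros Hr'; [assert (r = - a) by lra | assert (r = a) by lra];
    subst r; rewrite ?leaf_arc_opp in Er; lra.
Qed.

End LeafArc.

Definition leaf_double (s : R) : R := 2 * s * sqrt (1 + s ^ 4) / (1 - s ^ 4).

Lemma pow4_bounds s : -1 < s < 1 -> 0 <= s ^ 4 < 1.
Proof.
  intros Hs; replace (s ^ 4) with ((s ^ 2) ^ 2) by ring.
  assert (0 <= s ^ 2 < 1) by nra; split; nra.
Qed.

Lemma is_derive_leaf_double s : -1 < s < 1 ->
  is_derive leaf_double s
    (2 * (1 + 6 * s ^ 4 + s ^ 8) / ((1 - s ^ 4) ^ 2 * sqrt (1 + s ^ 4))).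
Proof.
  intros Hs; pose proof (pow4_bounds s Hs).
  assert (Hq : 0 < sqrt (1 + s ^ 4)) by (apply sqrt_lt_R0; lra).
  assert (Hq2 := sqrt_sqrt (1 + s ^ 4) ltac:(lra)).
  unfold leaf_double; auto_derive; [repeat split; lra|].
  replace (s * (s * (s * (s * 1)))) with (s ^ 4) by ring.
  set (q := sqrt (1 + s ^ 4)) in *.
  field_simplify_eq; [| repeat split; lra ..].
  replace (q ^ 2) with (1 + s ^ 4) by (rewrite <- Hq2; ring); ring.
Qed.

Lemma leaf_integrand2_leaf_double s : -1 < s < 1 ->
  leaf_integrand 2 (leaf_double s) = (1 - s ^ 4) ^ 2 / (1 + 6 * s ^ 4 + s ^ 8).
Proof.
  intros Hs; pose proof (pow4_bounds s Hs).
  assert (Hq2 := sqrt_sqrt (1 + s ^ 4) ltac:(lra)).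
  assert (HP : 0 < 1 + 6 * s ^ 4 + s ^ 8) by nra.
  (* (1 - u)^4 + 16 u (1 + u)^2 = (1 + 6 u + u^2)^2 with u = s^4 *)
  assert (E : 1 + leaf_double s ^ 4 = ((1 + 6 * s ^ 4 + s ^ 8) / (1 - s ^ 4) ^ 2) ^ 2).
  { unfold leaf_double; set (q := sqrt (1 + s ^ 4)) in *.
    replace ((2 * s * q / (1 - s ^ 4)) ^ 4) with (16 * s ^ 4 * (q * q) ^ 2 / (1 - s ^ 4) ^ 4)
      by (field; lra).
    rewrite Hq2; field; lra. }
  unfold leaf_integrand; change (2 * 2)%nat with 4%nat.
  rewrite E, sqrt_pow2; [field; lra|].
  apply Rle_mult_inv_pos; [lra | apply pow_lt; lra].
Qed.

Lemma leaf_arc2_leaf_double s : -1 < s < 1 ->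
  leaf_arc 2 (leaf_double s) = 2 * leaf_arc 2 s.
Proof.
  intros Hs.
  assert (Hdouble0 : leaf_double 0 = 0)
    by (unfold leaf_double; rewrite pow_i by lia; field; lra).
  enough (H : leaf_arc 2 (leaf_double s) - 2 * leaf_arc 2 s =
              leaf_arc 2 (leaf_double 0) - 2 * leaf_arc 2 0)
    by (rewrite Hdouble0, leaf_arc0 in H; lra).
  apply (eq_of_is_derive_0 (fun x => leaf_arc 2 (leaf_double x) - 2 * leaf_arc 2 x)).
  intros x Hx.
  assert (Hx' : -1 < x < 1)
    by (destruct (Rle_dec 0 s); [rewrite Rmin_left, Rmax_right in Hx
                                | rewrite Rmin_right, Rmax_left in Hx]; lra).
  pose proof (pow4_bounds x Hx').
  assert (Hq : 0 < sqrt (1 + x ^ 4)) by (apply sqrt_lt_R0; lra).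
  assert (HP : 0 < 1 + 6 * x ^ 4 + x ^ 8) by nra.
  (* hidden behind local names, the concrete functions are not unfolded by [auto_derive] *)
  set (F := leaf_arc 2); set (g := leaf_double); auto_derive; subst F g.
  - split; [apply ex_derive_leaf_arc|].
    split; [eexists; apply is_derive_leaf_double, Hx'|].
    split; [apply ex_derive_leaf_arc | exact I].
  - rewrite (is_derive_unique (fun y : R => leaf_double y) x _ (is_derive_leaf_double x Hx')),
      !Derive_leaf_arc, leaf_integrand2_leaf_double by exact Hx'.
    unfold leaf_integrand; change (2 * 2)%nat with 4%nat.
    field; repeat split; lra.
Qed.

Lemma leaf_double_ge s : 1 / 2 <= s < 1 -> 1 / (4 * (1 - s)) <= leaf_double s.
Proof.
  intros Hs; pose proof (pow4_bounds s ltac:(lra)).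
  assert (Hq : 1 <= sqrt (1 + s ^ 4)) by exact (one_le_sqrt_one_add_pow_even 2 s).
  assert (H1 : 1 - s ^ 4 <= 4 * (1 - s)).
  { replace (1 - s ^ 4) with ((1 - s) * ((1 + s) * (1 + s ^ 2))) by ring.
    assert ((1 + s) * (1 + s ^ 2) <= 4) by nra; nra. }
  apply Rle_trans with (1 / (1 - s ^ 4)).
  - apply Rmult_le_compat_l, Rinv_le_contravar; lra.
  - apply Rmult_le_compat_r; [apply Rlt_le, Rinv_0_lt_compat; lra | nra].
Qed.

Lemma leaf_double_unbounded x : exists s, 1 / 2 <= s < 1 /\ x < leaf_double s.
Proof.
  pose proof (Rle_abs x); pose proof (Rabs_pos x).
  assert (Hd : 0 < 1 / (4 * (Rabs x + 1)) <= 1 / 4).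
  { split; [apply Rdiv_lt_0_compat; lra|].
    apply Rmult_le_compat_l, Rinv_le_contravar; lra. }
  exists (1 - 1 / (4 * (Rabs x + 1))); split; [lra|].
  eapply Rlt_le_trans, leaf_double_ge; [|lra].
  replace (1 / (4 * (1 - (1 - 1 / (4 * (Rabs x + 1)))))) with (Rabs x + 1) by (field; lra).
  lra.
Qed.

Lemma leaf_arc2_lt_twice_arc1 x : leaf_arc 2 x < 2 * leaf_arc 2 1.
Proof.
  destruct (leaf_double_unbounded x) as [s [Hs Hx]].
  pose proof (leaf_arc_increment 2 _ _ Hx).
  pose proof (leaf_arc_increment 2 s 1 ltac:(lra)).
  rewrite leaf_arc2_leaf_double in * by lra; lra.
Qed.

Lemma is_lim_leaf_arc2 : is_lim (leaf_arc 2) p_infty (2 * leaf_arc 2 1).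
Proof.
  apply is_lim_spec; intros [e He]; simpl.
  set (s := Rmax (1 / 2) (1 - e / 4)).
  assert (Hs : 1 / 2 <= s < 1 /\ 1 - s <= e / 4).
  { pose proof (Rmax_l (1 / 2) (1 - e / 4)); pose proof (Rmax_r (1 / 2) (1 - e / 4)).
    assert (s < 1) by (apply Rmax_lub_lt; lra); unfold s in *; lra. }
  exists (leaf_double s); intros x Hx.
  pose proof (leaf_arc_increment 2 _ _ Hx).
  pose proof (leaf_arc_increment 2 s 1 ltac:(lra)).
  pose proof (leaf_arc2_lt_twice_arc1 x).
  rewrite leaf_arc2_leaf_double in * by lra.
  apply Rabs_def1; lra.
Qed.

Lemma zeta2E : zeta 2 = 2 * leaf_arc 2 1.
Proof.
  change (real (Lim (leaf_arc 2) p_infty) = 2 * leaf_arc 2 1).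
  rewrite (is_lim_unique _ _ _ is_lim_leaf_arc2); reflexivity.
Qed.

Theorem mainTheorem8 (l : R) :
  - zeta 2 < 2 * l < zeta 2 ->
  sleafh 2 (2 * l) =
    2 * sleafh 2 l * sqrt (1 + (sleafh 2 l) ^ 4) / (1 - (sleafh 2 l) ^ 4).
Proof.
  rewrite zeta2E; intros Hl.
  destruct (leaf_arc_onto 2 1 l ltac:(lra)) as [r [Hr <-]].
  rewrite <- leaf_arc2_leaf_double, !sleafh_leaf_arc by exact Hr.
  reflexivity.
Qed.
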